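(* Let $(X_B,X_C,X_R)$ be an OCC (not necessarily tight) in a graph $G$ and let $(A_B,A_C,A_R)$ be a tight OCC in $G$. Let $f_X\colon X_B \to \{0,1\}$ and $f_A \colon A_B \to \{0,1\}$ be proper $2$-colorings of $G[X_B]$ and $G[A_B]$ respectively. Define the following subsets of $X_B$: $A := \{ b \in X_B : b$ has a neighbor $c \in X_C \cap A_B$ with $f_X(b) = f_A(c)\}$, $R := \{ b \in X_B : b$ has a neighbor $c \in X_C \cap A_B$ with $f_X(b) \neq f_A(c)\}$, $N := N_G(X_C \cap A_R) \cap X_B$. Then $A_C \cap X_B$ is both a minimum-size $\{A,R\}$-separator and a minimum-size $\{A,R,N\}$-separator in $G[X_B]$.
   Context: An OCT of $G$ is a set $S \subseteq V(G)$ with $G - S$ bipartite; $\mathrm{oct}(G)$ is its minimum size. An odd cycle cut (OCC) of $G$ is a partition $(X_B, X_C, X_R)$ of $V(G)$ such that $G[X_B]$ is bipartite, there is no edge between $X_B$ and $X_R$, and $X_B \cup X_C \neq \emptyset$. It is tight if $|X_C| = \mathrm{oct}(G[X_B \cup X_C])$. A vertex set $X$ separates two (not necessarily disjoint) vertex sets $S,T$ in a graph if no connected component of the graph minus $X$ contains both a vertex of $S$ and a vertex of $T$; $X$ may intersect $S \cup T$. For sets $T_1,\dots,T_m$, a $\{T_1,\dots,T_m\}$-separator is a vertex set separating $T_i$ and $T_j$ for all $i \neq j$. The sets $A,R,N$ may overlap. *)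

(* A simple graph G is a finite type T of vertices with a
   symmetric irreflexive adjacency relation e : rel T. *)
From mathcomp Require Import all_boot.
Set Implicit Arguments. Unset Strict Implicit. Unset Printing Implicit Defensive.

Section Graph.
Variables (T : finType) (e : rel T).

Definition bipartite (S : {set T}) : bool :=
  [exists f : {ffun T -> bool},
     [forall x in S, forall y in S, e x y ==> (f x != f y)]].

Definition is_oct (S X : {set T}) : bool :=
  (X \subset S) && bipartite (S :\: X).

(* oct(G[S]) : the minimum size of an OCT of G[S] (S itself is always one). *)
Definition oct (S : {set T}) : nat :=
  \big[minn/#|S|]_(X : {set T} | is_oct S X) #|X|.

Definition is_occ (XB XC XR : {set T}) : Prop :=
  [/\ [&& [disjoint XB & XC], [disjoint XB & XR] & [disjoint XC & XR]],
      XB :|: XC :|: XR = setT,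
      bipartite XB,
      (forall x y, x \in XB -> y \in XR -> ~~ e x y) &
      XB :|: XC != set0].

Definition is_tight_occ (XB XC XR : {set T}) : Prop :=
  is_occ XB XC XR /\ #|XC| = oct (XB :|: XC).

Definition proper_2col (S : {set T}) (f : T -> bool) : Prop :=
  forall x y, x \in S -> y \in S -> e x y -> f x != f y.

Definition rel_minus (H X : {set T}) : rel T :=
  [rel x y | [&& e x y, x \in H :\: X & y \in H :\: X]].

Definition separates (H X S T' : {set T}) : Prop :=
  X \subset H /\
  forall s t, s \in S :&: (H :\: X) -> t \in T' :&: (H :\: X) ->
     ~~ connect (rel_minus H X) s t.

Definition sep2 (H X S1 S2 : {set T}) : Prop := separates H X S1 S2.
Definition sep3 (H X S1 S2 S3 : {set T}) : Prop :=
  [/\ separates H X S1 S2, separates H X S1 S3 & separates H X S2 S3].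

Definition min_sep2 (H X S1 S2 : {set T}) : Prop :=
  sep2 H X S1 S2 /\ forall Y, sep2 H Y S1 S2 -> #|X| <= #|Y|.
Definition min_sep3 (H X S1 S2 S3 : {set T}) : Prop :=
  sep3 H X S1 S2 S3 /\ forall Y, sep3 H Y S1 S2 S3 -> #|X| <= #|Y|.

End Graph.

From mathcomp Require Import all_boot.
Set Implicit Arguments. Unset Strict Implicit. Unset Printing Implicit Defensive.

(* Outside the separator [AC :&: XB], every vertex of A or R lies in AB, with
   f_X and f_A disagreeing on A and agreeing on R, while N avoids AB; since
   both colourings are proper, the pair (membership in AB, f_X xor f_A) is
   constant on components of G[X_B] minus the separator, which separates the
   three sets.  Conversely, if Y separates A from R in G[X_B], flipping f_X on
   the components of G[X_B] - Y that meet A and using f_A outside X_B properly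
   colours G[A_B u A_C] minus (A_C \ X_B) u Y, so tightness of (A_B, A_C, A_R)
   yields |A_C| <= |A_C \ X_B| + |Y|, i.e. |A_C n X_B| <= |Y|. *)

Lemma bigmin_leq (I : eqType) (r : seq I) (P : pred I) (F : I -> nat) m i0 :
  i0 \in r -> P i0 -> \big[minn/m]_(i <- r | P i) F i <= F i0.
Proof.
elim: r => [//|x r IH]; rewrite inE big_cons => /orP[/eqP <-|ir] Pi.
  by rewrite Pi geq_minl.
by case: (P x); rewrite ?geq_min IH ?orbT.
Qed.

Section Graph.
Variables (T : finType) (e : rel T).

Lemma oct_le (S X : {set T}) : is_oct e S X -> oct e S <= #|X|.
Proof. by move=> octX; apply: bigmin_leq octX; apply: mem_index_enum. Qed.

Lemma occ_cover (XB XC XR : {set T}) x :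
  is_occ e XB XC XR -> [\/ x \in XB, x \in XC | x \in XR].
Proof.
case=> _ cover _ _ _; have := in_setT x; rewrite -cover !inE.
by case/orP=> [/orP[]|] ?; [apply: Or31 | apply: Or32 | apply: Or33].
Qed.

Lemma occ_edge_from_B (XB XC XR : {set T}) x y :
  is_occ e XB XC XR -> x \in XB -> e x y -> y \in XB :|: XC.
Proof.
move=> occX xB exy; rewrite inE.
case: (occ_cover y occX) => [->|->|yR]; rewrite ?orbT //.
by case: occX => _ _ _ /(_ x y xB yR); rewrite exy.
Qed.

Lemma occ_edge_from_B_notin_C (XB XC XR : {set T}) x y :
  is_occ e XB XC XR -> x \in XB -> y \notin XC -> e x y -> y \in XB.
Proof.
by move=> occX xB yC /(occ_edge_from_B occX xB); rewrite inE (negbTE yC) orbF.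
Qed.

Lemma separates_by_label (L : eqType) (lab : T -> L) (H X S1 S2 : {set T}) :
  X \subset H ->
  (forall u v, rel_minus e H X u v -> lab u = lab v) ->
  (forall s t, s \in S1 :&: (H :\: X) -> t \in S2 :&: (H :\: X) ->
     lab s != lab t) ->
  separates e H X S1 S2.
Proof.
move=> sXH lab_edge lab_neq; split=> // s t sS1 tS2.
apply: contra (lab_neq s t sS1 tS2) => cst.
have cl : closed (rel_minus e H X) [pred u | lab u == lab s].
  by move=> u v /lab_edge; rewrite !inE => ->.
have := closed_connect cl cst.
by rewrite !inE eqxx eq_sym => <-.
Qed.

Hypothesis e_sym : symmetric e.

Lemma rel_minus_sym (H X : {set T}) : symmetric (rel_minus e H X).
Proof. by move=> x y; rewrite /rel_minus /= e_sym (andbC (x \in _)). Qed.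

Section SeparatorFromTightCut.
Variables (XB XC XR AB AC AR : {set T}) (fX fA : T -> bool).
Hypotheses (occX : is_occ e XB XC XR) (occA : is_occ e AB AC AR).
Hypotheses (fX_proper : proper_2col e XB fX) (fA_proper : proper_2col e AB fA).

Definition agreeing :=
  [set b in XB | [exists c in XC :&: AB, e b c && (fX b == fA c)]].
Definition disagreeing :=
  [set b in XB | [exists c in XC :&: AB, e b c && (fX b != fA c)]].
Definition touching_AR := [set b in XB | [exists c in XC :&: AR, e b c]].

Definition parity v : option bool :=
  if v \in AB then Some (fX v (+) fA v) else None.

Lemma notin_AC_nbr_AB b c : b \notin AC -> c \in AB -> e b c -> b \in AB.
Proof.
move=> bAC cAB ebc; apply: occ_edge_from_B_notin_C occA cAB bAC _.
by rewrite e_sym.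
Qed.

Lemma parity_edge u v : rel_minus e XB (AC :&: XB) u v -> parity u = parity v.
Proof.
case/and3P=> euv; rewrite !inE => /andP[uS uXB] /andP[vS vXB].
rewrite uXB andbT in uS; rewrite vXB andbT in vS.
have AB_eq : (u \in AB) = (v \in AB).
  apply/idP/idP => [uAB|vAB]; last exact: notin_AC_nbr_AB uS vAB euv.
  by apply: notin_AC_nbr_AB vS uAB _; rewrite e_sym.
rewrite /parity -AB_eq; case: ifP => // uAB; congr Some.
have vAB : v \in AB by rewrite -AB_eq.
move: (fX_proper uXB vXB euv) (fA_proper uAB vAB euv).
by case: (fX u); case: (fX v); case: (fA u); case: (fA v).
Qed.

Lemma parity_agreeing s : s \in agreeing -> s \notin AC -> parity s = Some true.
Proof.
rewrite inE => /andP[_ /exists_inP[c]]; rewrite inE => /andP[_ cAB].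
move=> /andP[esc /eqP fXs] sAC; have sAB := notin_AC_nbr_AB sAC cAB esc.
rewrite /parity sAB fXs; move: (fA_proper sAB cAB esc).
by case: (fA s); case: (fA c).
Qed.

Lemma parity_disagreeing s :
  s \in disagreeing -> s \notin AC -> parity s = Some false.
Proof.
rewrite inE => /andP[_ /exists_inP[c]]; rewrite inE => /andP[_ cAB].
move=> /andP[esc fXs] sAC; have sAB := notin_AC_nbr_AB sAC cAB esc.
rewrite /parity sAB; move: fXs (fA_proper sAB cAB esc).
by case: (fX s); case: (fA s); case: (fA c).
Qed.

Lemma parity_touching_AR s : s \in touching_AR -> parity s = None.
Proof.
rewrite inE => /andP[sXB /exists_inP[c]]; rewrite inE => /andP[_ cAR] esc.
rewrite /parity; case: ifP => // sAB.
by case: occA => _ _ _ /(_ s c sAB cAR); rewrite esc.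
Qed.

Lemma separates_by_parity (S1 S2 : {set T}) p1 p2 :
  (forall s, s \in S1 -> s \notin AC -> parity s = p1) ->
  (forall s, s \in S2 -> s \notin AC -> parity s = p2) ->
  p1 != p2 -> separates e XB (AC :&: XB) S1 S2.
Proof.
move=> par1 par2 p12; apply: separates_by_label parity_edge _ => [|s t].
  exact: subsetIr.
rewrite !inE => /and3P[sS1 + sXB] /and3P[tS2 + tXB].
by rewrite sXB tXB !andbT => sAC tAC; rewrite par1 // par2.
Qed.

Lemma sep3_AC_XB : sep3 e XB (AC :&: XB) agreeing disagreeing touching_AR.
Proof.
have par_N s : s \in touching_AR -> s \notin AC -> parity s = None.
  by move=> sN _; apply: parity_touching_AR.
by split; apply: separates_by_parity;
  (exact: parity_agreeing || exact: parity_disagreeing || exact: par_N || done).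
Qed.

Section RecolourAlongSeparator.
Variable Y : {set T}.
Hypothesis Y_sep : sep2 e XB Y agreeing disagreeing.

Definition reaches_agreeing v :=
  [exists a in agreeing :\: Y, connect (rel_minus e XB Y) v a].

Definition recolour v :=
  if v \in XB then fX v (+) reaches_agreeing v else fA v.

Definition oct_of_sep := (AC :\: XB) :|: (Y :&: (AB :|: AC)).

Lemma reaches_agreeing_edge u v :
  rel_minus e XB Y u v -> reaches_agreeing u = reaches_agreeing v.
Proof.
move=> ruv; apply/exists_inP/exists_inP => -[a aA ca]; exists a => //.
  by apply: connect_trans ca; apply: connect1; rewrite rel_minus_sym.
exact: connect_trans (connect1 ruv) ca.
Qed.

Lemma recolour_cross_edge u v : u \in XB -> u \notin Y -> v \notin XB ->
  v \in AB -> e u v -> recolour u != fA v.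
Proof.
move=> uXB uY vXB vAB euv.
have vXC : v \in XC.
  by move: (occ_edge_from_B occX uXB euv); rewrite inE (negbTE vXB).
have nbr_v (P : rel bool) : P (fX u) (fA v) ->
    [exists c in XC :&: AB, e u c && P (fX u) (fA c)].
  by move=> Puv; apply/exists_inP; exists v; rewrite ?inE ?vXC ?vAB ?euv.
rewrite /recolour uXB; have [fXuv|fXuv] := eqVneq (fX u) (fA v).
  have uA : u \in agreeing :\: Y.
    by rewrite !inE uY uXB /=; apply: (nbr_v eq_op); rewrite fXuv.
  have -> : reaches_agreeing u by apply/exists_inP; exists u.
  by rewrite fXuv addbT; case: (fA v).
have uR : u \in disagreeing :&: (XB :\: Y).
  by rewrite !inE uY uXB /= andbT; apply: (nbr_v (fun x y => x != y)).
suff -> : reaches_agreeing u = false by rewrite addbF.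
apply/negbTE/exists_inP => -[a aA cua].
have aA' : a \in agreeing :&: (XB :\: Y).
  by move: aA; rewrite !inE => /andP[-> /andP[-> ->]].
case: Y_sep => _ /(_ a u aA' uR).
by rewrite (sym_connect_sym (rel_minus_sym XB Y)) cua.
Qed.

Lemma notin_oct_of_sep u : u \in (AB :|: AC) :\: oct_of_sep ->
  u \notin Y /\ (u \notin XB -> u \in AB).
Proof.
rewrite !inE.
by case: (u \in Y); case: (u \in XB); case: (u \in AB); case: (u \in AC).
Qed.

Lemma oct_of_sep_is_oct : is_oct e (AB :|: AC) oct_of_sep.
Proof.
apply/andP; split.
  rewrite /oct_of_sep subUset subsetIr andbT.
  exact: subset_trans (subsetDl _ _) (subsetUr _ _).
apply/existsP; exists [ffun v => recolour v].
apply/forall_inP => u /notin_oct_of_sep[uY uAB].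
apply/forall_inP => v /notin_oct_of_sep[vY vAB].
apply/implyP => euv; rewrite !ffunE.
have [uXB|uXB] := boolP (u \in XB); have [vXB|vXB] := boolP (v \in XB).
- have ruv : rel_minus e XB Y u v.
    by rewrite /rel_minus /= euv !inE uY vY uXB vXB.
  rewrite /recolour uXB vXB (reaches_agreeing_edge ruv).
  move: (fX_proper uXB vXB euv).
  by case: (fX u); case: (fX v); case: reaches_agreeing.
- rewrite {2}/recolour (negbTE vXB).
  by apply: recolour_cross_edge; rewrite ?vAB.
- rewrite eq_sym {2}/recolour (negbTE uXB).
  by apply: recolour_cross_edge; rewrite ?uAB // e_sym.
- rewrite /recolour (negbTE uXB) (negbTE vXB).
  by apply: fA_proper; rewrite ?uAB ?vAB.
Qed.

Lemma card_AC_XB_le_sep2 : #|AC| = oct e (AB :|: AC) -> #|AC :&: XB| <= #|Y|.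
Proof.
move=> tight; have := oct_le oct_of_sep_is_oct.
have Zle : #|oct_of_sep| <= #|AC :\: XB| + #|Y|.
  apply: leq_trans (leq_card_setU _ _) _.
  by rewrite leq_add2l subset_leq_card ?subsetIl.
by move=> /leq_trans/(_ Zle); rewrite -tight -(cardsID XB AC) addnC leq_add2l.
Qed.

End RecolourAlongSeparator.

End SeparatorFromTightCut.

End Graph.

Theorem lemma3p5 (T : finType) (e : rel T) (e_sym : symmetric e)
  (e_irr : irreflexive e)
  (XB XC XR AB AC AR : {set T}) (fX fA : T -> bool) :
  is_occ e XB XC XR ->
  is_tight_occ e AB AC AR ->
  proper_2col e XB fX ->
  proper_2col e AB fA ->
  let A := [set b in XB | [exists c in XC :&: AB, e b c && (fX b == fA c)]] in
  let R := [set b in XB | [exists c in XC :&: AB, e b c && (fX b != fA c)]] in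
  let N := [set b in XB | [exists c in XC :&: AR, e b c]] in
  min_sep2 e XB (AC :&: XB) A R /\ min_sep3 e XB (AC :&: XB) A R N.
Proof.
move=> occX [occA tight] fX_proper fA_proper A R N.
have sep : sep3 e XB (AC :&: XB) A R N by apply: sep3_AC_XB.
have minY Y : sep2 e XB Y A R -> #|AC :&: XB| <= #|Y|.
  by move=> Y_sep; exact: (card_AC_XB_le_sep2 e_sym occX fX_proper fA_proper
                             Y_sep tight).
by have [sepAR _ _] := sep; split; split=> // Y [/minY].
Qed.
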